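(* Let $t\in\frac{m+n}{2}+\mathbb Z$ and $s:=t+\frac{n-m}{2}-1\in\mathbb Z$. (a) In the non-exceptional case, $t$ satisfies $|t-\kappa|<L+\frac12$ (equivalently, by the characterization of critical numbers, $t\in\mathrm{Crit}$) if and only if $$\check\mu_{a_j}\ge\lambda_j-s\ge\check\mu_{1+a_j}\quad\text{for } j=1,\dots,m.\qquad(I_j)$$ (b) In the exceptional case, $t$ satisfies $|t-\kappa|<L+\frac12$ if and only if $s$ satisfies $(I_j)$ for all $j\neq\frac{m+1}{2}$ together with the middle condition $$\check\mu_{\frac{n-1}{2}}\ge\lambda_{\frac{m+1}{2}}-s\ge\check\mu_{\frac{n+3}{2}}-1\quad\text{if } k \text{ is even},$$ respectively $$\lambda_{\frac{m-1}{2}}\ge\check\mu_{\frac{n+1}{2}}+s\ge\lambda_{\frac{m+3}{2}}\quad\text{if } k \text{ is odd}.$$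
   Context: Let $n,m\ge1$, not both $1$. For $N\ge1$: $L_0^+(N):=\{(w,l)\in\mathbb Z\times\mathbb Z^N:\ l_1>\dots>l_N,\ l_i+l_{N+1-i}=0,\ w+l_i\equiv N+1 \bmod 2\}$; $X^+(N):=\{\mu\in\mathbb Z^N:\mu_1\ge\dots\ge\mu_N\}$; $X_0^+(N):=\{\mu\in X^+(N):\mu_i+\mu_{N+1-i}\text{ independent of } i\}$. Bijection $L_0^+(N)\to X_0^+(N)$: $(w,l)\mapsto\mu$, $\mu_i=\frac{w+l_i+2i-1-N}{2}$; inverse $w=\mu_1+\mu_N$, $l_i=2\mu_i+N+1-w-2i$. Let $\mu\in X_0^+(n)$, $\nu\in X_0^+(m)$ correspond to $(w,l)$, $(w',l')$. The dual weight is $\check\mu_i:=-\mu_{n+1-i}$. Put $\kappa:=\frac12(w+w'+1)$, $L_0:=\min\{|l_i-l'_j|: i\ne\frac{n+1}2\text{ or }j\ne\frac{m+1}2\}$, $L:=L_0/2$. The exceptional case: $n\equiv m\equiv1\bmod 2$. Standing assumptions: $l_1>l'_1$, and for every pair $(i,j)$ either $l_i\neq l'_j$ or ($n,m$ odd, $i=\frac{n+1}2$, $j=\frac{m+1}2$). Position tuple: $a_j\in\{1,\dots,n-1\}$ is the unique integer with $l_{a_j}>l'_j\ge l_{1+a_j}$, $j=1,\dots,m$. An index $j\in\{1,\dots,m-1\}$ is a jump index if $a_j<a_{j+1}$; $k$ is the number of jump indices. $\lambda_j:=\nu_j+a_j-j$. *)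

(* Vectors are 1-indexed functions nat -> int; only the
   entries with index in 1..n (resp. 1..m) are ever used. *)
From HB Require Import structures.
From mathcomp Require Import all_boot all_order all_algebra.
Set Implicit Arguments. Unset Strict Implicit. Unset Printing Implicit Defensive.
Import Order.TTheory GRing.Theory Num.Theory.
Local Open Scope ring_scope.

Definition X0plus (N : nat) (mu : nat -> int) : Prop :=
  (forall i : nat, (1 <= i < N)%N -> mu i.+1 <= mu i) /\
  (forall i : nat, (1 <= i <= N)%N -> mu i + mu (N.+1 - i)%N = mu 1%N + mu N).

Definition wt (N : nat) (mu : nat -> int) : int := mu 1%N + mu N.
Definition lw (N : nat) (mu : nat -> int) (i : nat) : int :=
  2 * mu i + (N.+1)%:Z - wt N mu - 2 * i%:Z.

Definition dualw (N : nat) (mu : nat -> int) (i : nat) : int := - mu (N.+1 - i)%N.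

Definition is_mid (N i : nat) : bool := odd N && (i == N.+1./2)%N.
Definition nonmid (n m i j : nat) : bool := ~~ (is_mid n i && is_mid m j).

(* L_0 = min |l_i - l'_j| over pairs (i,j) in [1,n]x[1,m] not both middle.
   The pair (1,1) is always admissible (n,m not both 1), so |l_1 - l'_1| is a
   valid seed for the minimum. *)
Definition L0 (n m : nat) (mu nu : nat -> int) : nat :=
  let d := `|lw n mu 1%N - lw m nu 1%N|%N in
  \big[minn/d]_(1 <= i < n.+1)
    \big[minn/d]_(1 <= j < m.+1 | nonmid n m i j) `|lw n mu i - lw m nu j|%N.

Definition kappa (n m : nat) (mu nu : nat -> int) : rat :=
  (wt n mu + wt m nu + 1)%:~R / 2.
Definition Lhalf (n m : nat) (mu nu : nat -> int) : rat := (L0 n m mu nu)%:R / 2.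

Definition standing (n m : nat) (mu nu : nat -> int) : Prop :=
  lw m nu 1%N < lw n mu 1%N /\
  forall i j : nat, (1 <= i <= n)%N -> (1 <= j <= m)%N ->
    lw n mu i != lw m nu j \/
    [/\ odd n, odd m, i = n.+1./2 & j = m.+1./2]%N.

Definition position_tuple (n m : nat) (mu nu : nat -> int) (a : nat -> nat) : Prop :=
  forall j : nat, (1 <= j <= m)%N ->
    (1 <= a j <= n.-1)%N /\
    lw m nu j < lw n mu (a j) /\ lw n mu (a j).+1 <= lw m nu j.

Definition njumps (m : nat) (a : nat -> nat) : nat :=
  count (fun j => a j < a j.+1)%N (iota 1 m.-1).

Definition lam (nu : nat -> int) (a : nat -> nat) (j : nat) : int :=
  nu j + (a j)%:Z - j%:Z.

Definition condI (n : nat) (mu nu : nat -> int) (a : nat -> nat) (s : int) (j : nat) : Prop :=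
  dualw n mu (a j) >= lam nu a j - s /\ lam nu a j - s >= dualw n mu (a j).+1.

From HB Require Import structures.
From mathcomp Require Import all_boot all_order all_algebra zify ring lra.
Set Implicit Arguments.
Unset Strict Implicit.
Unset Printing Implicit Defensive.
Import Order.TTheory GRing.Theory Num.Theory.
Local Open Scope ring_scope.

(* Write l, l' for the strictly decreasing, antisymmetric sequences attached to
   mu and nu, and z := 2 (t - kappa), an integer of parity opposite to every
   l_i - l'_j; so t is critical iff |z| < L_0.  Condition (I_j) says that
   l'_j - z still lies strictly between l_{1+a_j} and l_{a_j}: translating l' by
   -z moves no l'_j across an l_i.  If |z| < L_0 nothing can cross.  Conversely,
   if nothing crosses then |z| < |l_i - l'_j| whenever l_i <> l'_j, by applying
   the no-crossing property to (i, j) and to its mirror pair (n+1-i, m+1-j).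
   In the exceptional case l_{(n+1)/2} = l'_{(m+1)/2} = 0 is discarded from
   L_0, and l'_{(m+1)/2} may only move within ]l_{(n+3)/2}, l_{(n-1)/2}[.  The
   jump indices j and m - j come in pairs, except (m-1)/2 and (m+1)/2; the
   latter is always a jump, so k is odd exactly when a_{(m-1)/2} = (n-1)/2, and
   then |l_{(n+1)/2} - l'_{(m-1)/2}| = l'_{(m-1)/2} is the binding constraint. *)

Definition decreasing_on (N : nat) (f : nat -> int) :=
  forall i j, (1 <= i)%N -> (i < j <= N)%N -> f j < f i.

Definition antisymmetric_on (N : nat) (f : nat -> int) :=
  forall i, (1 <= i <= N)%N -> f (N.+1 - i)%N = - f i.

Section DecreasingOn.
Variables (N : nat) (f : nat -> int).
Hypothesis f_decr : decreasing_on N f.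

Lemma decreasing_on_le i j : (1 <= i)%N -> (i <= j <= N)%N -> f j <= f i.
Proof.
move=> i1 /andP[]; rewrite leq_eqVlt => /orP[/eqP-> // | ij jN].
by apply/ltW/f_decr; rewrite ?ij.
Qed.

Lemma decreasing_on_ltn i j :
  (1 <= i <= N)%N -> (1 <= j <= N)%N -> f i < f j -> (j < i)%N.
Proof.
move=> /andP[i1 _] /andP[_ jN] lt_ij; rewrite ltnNge.
by apply: contraTN lt_ij => ij; rewrite -leNgt decreasing_on_le ?ij.
Qed.

Lemma decreasing_on_leq i j :
  (1 <= i <= N)%N -> (1 <= j <= N)%N -> f i <= f j -> (j <= i)%N.
Proof.
move=> /andP[i1 _] /andP[_ jN] le_ij; rewrite leqNgt.
by apply: contraTN le_ij => ij; rewrite -ltNge f_decr ?ij.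
Qed.

End DecreasingOn.

Lemma count_iota_reflect (p q : pred nat) b c k :
  (forall i, (i < k)%N -> p (b + i)%N = q (c + k - 1 - i)%N) ->
  count p (iota b k) = count q (iota c k).
Proof.
elim: k b => [//|k IH] b pq.
rewrite -[in RHS]addn1 iotaD count_cat /= addn0 addnC.
have -> : p b = q (c + k) by rewrite -[b]addn0 pq //; congr q; lia.
congr (_ + _); apply: IH => i ik.
by rewrite addSnnS pq; [congr q; lia | lia].
Qed.

Lemma bigminn_attained (I : eqType) (r : seq I) (P : pred I) (F : I -> nat) d :
  \big[minn/d]_(i <- r | P i) F i = d \/
  exists2 i, (i \in r) && P i & \big[minn/d]_(i <- r | P i) F i = F i.
Proof.
rewrite big_seq_cond; elim/big_ind: _ => [|x y hx hy|i ri]; [by left | | by right; exists i].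
by rewrite /minn; case: ifP.
Qed.

Lemma bigminn_le (I : eqType) (r : seq I) (P : pred I) (F : I -> nat) d i :
  i \in r -> P i -> (\big[minn/d]_(k <- r | P k) F k <= F i)%N.
Proof. by move=> ir Pi; have := ge_bigmin_seq (T:=nat) d i P F ir Pi; rewrite minEnat leEnat. Qed.

Lemma nonmid_nonexc n m i j : ~~ (odd n && odd m) -> nonmid n m i j.
Proof. by apply: contra => /andP[/andP[-> _] /andP[-> _]]. Qed.

Lemma nonmid_j n m i j : j != m.+1./2 -> nonmid n m i j.
Proof. by move=> /negbTE jm; rewrite /nonmid /is_mid jm !andbF. Qed.

Lemma nonmid_i n m i j : i != n.+1./2 -> nonmid n m i j.
Proof. by move=> /negbTE im; rewrite /nonmid /is_mid im !andbF. Qed.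

Record interlacing (n m : nat) (l l' : nat -> int) (a : nat -> nat) : Prop := {
  decreasing_l : decreasing_on n l;
  decreasing_l' : decreasing_on m l';
  antisymmetric_l : antisymmetric_on n l;
  antisymmetric_l' : antisymmetric_on m l';
  separated : forall i j, (1 <= i <= n)%N -> (1 <= j <= m)%N -> nonmid n m i j ->
    l i != l' j;
  position : forall j, (1 <= j <= m)%N ->
    [/\ (1 <= a j < n)%N, l' j < l (a j) & l (a j).+1 <= l' j]
}.

Section Interlacing.
Variables (n m : nat) (l l' : nat -> int) (a : nat -> nat).
Hypothesis I : interlacing n m l l' a.

Definition in_gap (z : int) j := l (a j).+1 < l' j - z < l (a j).

Definition no_cross (z : int) i j :=
  (l' j < l i -> l' j - z < l i) /\ (l i < l' j -> l i < l' j - z).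

Definition min_gap (L : int) :=
  (forall i j, (1 <= i <= n)%N -> (1 <= j <= m)%N -> nonmid n m i j ->
     L <= `|l i - l' j|) /\
  exists i j, [/\ (1 <= i <= n)%N, (1 <= j <= m)%N, nonmid n m i j & L = `|l i - l' j|].

Lemma position_monotone j j' : (1 <= j)%N -> (j <= j' <= m)%N -> (a j <= a j')%N.
Proof.
move=> j1 /andP[jj' j'm].
have [/andP[aj1 ajn] above _] := position I (j := j) ltac:(lia).
have [/andP[aj'1 aj'n] _ below'] := position I (j := j') ltac:(lia).
have l'_le : l' j' <= l' j by apply: (decreasing_on_le (decreasing_l' I)); rewrite ?jj'.
suff : (a j < (a j').+1)%N by [].
by apply: (decreasing_on_ltn (decreasing_l I)); [lia | lia | lra].
Qed.

Lemma no_cross_in_gap z i j :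
  (1 <= i <= n)%N -> (1 <= j <= m)%N -> in_gap z j -> no_cross z i j.
Proof.
move=> hi hj /andP[gap_lo gap_hi].
have [/andP[a1 an] above below] := position I hj.
split=> lt_ij.
- have ia : (i < (a j).+1)%N.
    by apply: (decreasing_on_ltn (decreasing_l I)); [lia | lia | lra].
  have := decreasing_on_le (decreasing_l I) (i := i) (j := a j); lia.
- have ai : (a j < i)%N.
    by apply: (decreasing_on_ltn (decreasing_l I)); [lia | lia | lra].
  have := decreasing_on_le (decreasing_l I) (i := (a j).+1) (j := i); lia.
Qed.

Lemma in_gap_of_window z L j : (1 <= j <= m)%N ->
  L <= `|l (a j) - l' j| -> L <= `|l (a j).+1 - l' j| -> `|z| < L -> in_gap z j.
Proof. by move=> hj; have [_ above below] := position I hj; rewrite /in_gap; lia. Qed.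

Lemma window_of_no_cross z i j :
  (forall i j, (1 <= i <= n)%N -> (1 <= j <= m)%N -> no_cross z i j) ->
  (1 <= i <= n)%N -> (1 <= j <= m)%N -> l i != l' j -> `|z| < `|l i - l' j|.
Proof.
move=> nc hi hj ne.
have [above below] := nc i j hi hj.
have [above' below'] := nc (n.+1 - i)%N (m.+1 - j)%N ltac:(lia) ltac:(lia).
rewrite (antisymmetric_l I hi) (antisymmetric_l' I hj) !ltrN2 in above' below'.
case: (ltrgtP (l i) (l' j)) => [lt | gt | eq]; last by rewrite eq eqxx in ne.
- by have := below lt; have := above' lt; lia.
- by have := above gt; have := below' gt; lia.
Qed.

Lemma window_of_all_no_cross z L : min_gap L ->
  (forall i j, (1 <= i <= n)%N -> (1 <= j <= m)%N -> no_cross z i j) -> `|z| < L.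
Proof.
move=> [_ [i [j [hi hj nm ->]]]] nc.
exact: window_of_no_cross nc hi hj (separated I hi hj nm).
Qed.

Lemma window_iff_in_gap z L : ~~ (odd n && odd m) -> min_gap L ->
  `|z| < L <-> forall j, (1 <= j <= m)%N -> in_gap z j.
Proof.
move=> ne hL; split => [w j hj | gap].
- have [/andP[a1 an] _ _] := position I hj.
  by apply: (in_gap_of_window hj _ _ w); apply: hL.1 => //; first [lia | exact: nonmid_nonexc].
- apply: window_of_all_no_cross hL _ => i j hi hj.
  exact: no_cross_in_gap hi hj (gap j hj).
Qed.

Section Exceptional.
Hypotheses (n_odd : odd n) (m_odd : odd m).

Lemma three_le_n : (3 <= n)%N.
Proof. by have [/andP[a1 an] _ _] := position I (j := m.+1./2) ltac:(lia); lia. Qed.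

Lemma l_mid : l n.+1./2 = 0.
Proof.
have := antisymmetric_l I (i := n.+1./2) ltac:(lia).
by rewrite (_ : (n.+1 - n.+1./2 = n.+1./2)%N); lia.
Qed.

Lemma l'_mid : l' m.+1./2 = 0.
Proof.
have := antisymmetric_l' I (i := m.+1./2) ltac:(lia).
by rewrite (_ : (m.+1 - m.+1./2 = m.+1./2)%N); lia.
Qed.

Lemma l_below_mid_gt0 : 0 < l n.-1./2.
Proof.
have n3 := three_le_n; rewrite -l_mid.
by apply: (decreasing_l I (i := n.-1./2) (j := n.+1./2)); lia.
Qed.

Lemma l_above_mid : l (n + 3)./2 = - l n.-1./2.
Proof.
have n3 := three_le_n.
have -> : ((n + 3)./2 = n.+1 - n.-1./2)%N by lia.
by rewrite (antisymmetric_l I) //; lia.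
Qed.

Lemma a_mid : a m.+1./2 = n.-1./2.
Proof.
have n3 := three_le_n.
have [/andP[a1 an] above below] := position I (j := m.+1./2) ltac:(lia).
rewrite l'_mid -l_mid in above below.
have := decreasing_on_ltn (decreasing_l I) (i := n.+1./2) (j := a m.+1./2).
have := decreasing_on_leq (decreasing_l I) (i := (a m.+1./2).+1) (j := n.+1./2).
lia.
Qed.

Lemma a_mirror j : (1 <= j <= m)%N -> j != m.+1./2 -> a (m.+1 - j) = (n - a j)%N.
Proof.
move=> hj j_mid.
have [/andP[a1 an] above below] := position I hj.
have [/andP[a1' an'] above' below'] := position I (j := (m.+1 - j)%N) ltac:(lia).
have below_strict : l (a j).+1 < l' j.
  by rewrite lt_neqAle below andbT (separated I _ hj (nonmid_j _ _ j_mid)); lia.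
rewrite (antisymmetric_l' I hj) in above' below'.
have e1 : l (n - a j)%N = - l (a j).+1.
  by rewrite (_ : (n - a j = n.+1 - (a j).+1)%N) ?(antisymmetric_l I) //; lia.
have e2 : l (n - a j).+1 = - l (a j).
  by rewrite (_ : ((n - a j).+1 = n.+1 - a j)%N) ?(antisymmetric_l I) //; lia.
have := decreasing_on_ltn (decreasing_l I) (i := (a (m.+1 - j)).+1) (j := (n - a j)%N).
have := decreasing_on_ltn (decreasing_l I) (i := (n - a j).+1) (j := a (m.+1 - j)).
lia.
Qed.

Lemma odd_njumps : odd (njumps m a) = (1 < m)%N && (a m.-1./2 == n.-1./2).
Proof.
rewrite /njumps; have [h0 | h_gt0] := posnP m.-1./2.
  by rewrite (_ : m = 1)%N //; lia.
set h := m.-1./2 in h_gt0 *.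
have m_eq : m.-1 = ((h - 1) + (2 + (h - 1)))%N by lia.
rewrite m_eq iotaD iotaD !count_cat (_ : (1 + (h - 1) = h)%N); last by lia.
set jump := fun j => (a j < a j.+1)%N.
have pair_off : count jump (iota (h + 2) (h - 1)) = count jump (iota 1 (h - 1)).
  symmetry; apply: count_iota_reflect => i ih; rewrite /jump.
  have hi1 : (1 <= i.+1 <= m)%N by lia.
  have hi2 : (1 <= i.+2 <= m)%N by lia.
  rewrite (_ : (h + 2 + (h - 1) - 1 - i = m.+1 - i.+2)%N); last by lia.
  rewrite (_ : (m.+1 - i.+2).+1 = m.+1 - i.+1)%N; last by lia.
  rewrite add1n !a_mirror //; [|apply/eqP; lia | apply/eqP; lia].
  have [/andP[_ an1] _ _] := position I hi1; have [/andP[_ an2] _ _] := position I hi2.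
  by apply/idP/idP; lia.
have a_mid' : a h.+1 = n.-1./2 by rewrite -a_mid; congr a; lia.
have a_h_le := position_monotone (j := h) (j' := h.+1) ltac:(lia) ltac:(lia).
have jump_mid : jump h.+1.
  rewrite /jump (_ : h.+2 = m.+1 - h)%N ?a_mirror; [|lia|lia|apply/eqP; lia].
  have [/andP[_ an] _ _] := position I (j := h) ltac:(lia); lia.
have count_mid : count jump (iota h 2) = (jump h + 1)%N by rewrite /= jump_mid addn0.
rewrite pair_off count_mid; move: a_h_le; rewrite /jump a_mid'; lia.
Qed.

Lemma no_cross_mid z i : (1 <= i <= n)%N -> `|z| < l n.-1./2 -> no_cross z i m.+1./2.
Proof.
move=> hi w; have n3 := three_le_n; rewrite /no_cross l'_mid.
split=> lt_i.
- have : (i < n.+1./2)%N.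
    by apply: (decreasing_on_ltn (decreasing_l I)); rewrite ?l_mid; lia.
  have := decreasing_on_le (decreasing_l I) (i := i) (j := n.-1./2); lia.
- have : (n.+1./2 < i)%N.
    by apply: (decreasing_on_ltn (decreasing_l I)); rewrite ?l_mid; lia.
  have := decreasing_on_le (decreasing_l I) (i := (n + 3)./2) (j := i).
  have := l_above_mid; lia.
Qed.

Lemma window_iff_in_gap_exceptional z L : min_gap L ->
  `|z| < L <->
  (forall j, (1 <= j <= m)%N -> j != m.+1./2 -> in_gap z j) /\
  (if ~~ odd (njumps m a) then `|z| < l n.-1./2 else `|z| < l' m.-1./2).
Proof.
move=> hL; have n3 := three_le_n; have l_pos := l_below_mid_gt0.
have l'_pos : (1 < m)%N -> 0 < l' m.-1./2.
  by move=> m1; rewrite -l'_mid; apply: (decreasing_l' I (i := m.-1./2) (j := m.+1./2)); lia.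
have odd_k : odd (njumps m a) -> (1 < m)%N /\ a m.-1./2 = n.-1./2.
  by rewrite odd_njumps => /andP[-> /eqP].
split => [w | [gap mid]].
- split=> [j hj jm | ].
    have [/andP[a1 an] _ _] := position I hj.
    by apply: (in_gap_of_window hj _ _ w); apply: hL.1 => //; first [lia | exact: nonmid_j].
  case: ifPn => [_ | /negPn/odd_k[m1 _]].
    have nm : nonmid n m n.-1./2 m.+1./2 by apply: nonmid_i; apply/eqP; lia.
    by have := hL.1 n.-1./2 m.+1./2 ltac:(lia) ltac:(lia) nm; rewrite l'_mid; lia.
  have nm : nonmid n m n.+1./2 m.-1./2 by apply: nonmid_j; apply/eqP; lia.
  by have := hL.1 n.+1./2 m.-1./2 ltac:(lia) ltac:(lia) nm; rewrite l_mid; have := l'_pos m1; lia.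
- have w_mid : `|z| < l n.-1./2.
    move: mid; case: ifPn => // /negPn/odd_k[m1 ah].
    have [_ above _] := position I (j := m.-1./2) ltac:(lia).
    by rewrite ah in above; lia.
  apply: window_of_all_no_cross hL _ => i j hi hj.
  have [-> | jm] := eqVneq j m.+1./2; first exact: no_cross_mid.
  exact: no_cross_in_gap hi hj (gap j hj jm).
Qed.

End Exceptional.
End Interlacing.

Lemma X0plus_decreasing N mu : X0plus N mu -> decreasing_on N (lw N mu).
Proof.
move=> [step _] i j i1 /andP[ij jN].
pose D := [pred k : nat | 1 <= k <= N]%N.
have step_lt : {in D, forall k, k.+1 \in D -> lw N mu k.+1 < lw N mu k}.
  move=> k /andP[k1 _] /andP[_ kN]; have := step k ltac:(lia); rewrite /lw; lia.
have := homo_ltn_in (D := D) (r := fun x y : int => y < x) _ _ step_lt; apply.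
- by move=> y x z yx zy; exact: lt_trans zy yx.
- by move=> p q /andP[p1 _] /andP[_ qN] r /andP[pr rq]; rewrite inE; lia.
- by rewrite inE; lia.
- by rewrite inE; lia.
- exact: ij.
Qed.

Lemma X0plus_antisymmetric N mu : X0plus N mu -> antisymmetric_on N (lw N mu).
Proof. by move=> [_ sym] i hi; have := sym i hi; rewrite /lw /wt; lia. Qed.

Lemma interlacing_of_standing n m mu nu a :
  X0plus n mu -> X0plus m nu -> standing n m mu nu -> position_tuple n m mu nu a ->
  interlacing n m (lw n mu) (lw m nu) a.
Proof.
move=> Xmu Xnu [_ st] pos; split.
- exact: X0plus_decreasing.
- exact: X0plus_decreasing.
- exact: X0plus_antisymmetric.
- exact: X0plus_antisymmetric.
- move=> i j hi hj nm; case: (st i j hi hj) => // [[n_odd m_odd ei ej]].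
  by move: nm; rewrite ei ej /nonmid /is_mid n_odd m_odd !eqxx.
- by move=> j hj; have [a_range [above below]] := pos j hj; split => //; lia.
Qed.

Lemma min_gap_L0 n m mu nu : (1 <= n)%N -> (1 <= m)%N -> ~~ ((n == 1) && (m == 1))%N ->
  min_gap n m (lw n mu) (lw m nu) (L0 n m mu nu).
Proof.
move=> n1 m1 not11; rewrite /L0; set d := `|lw n mu 1%N - lw m nu 1%N|%N.
set row := fun i => \big[minn/d]_(1 <= j < m.+1 | nonmid n m i j) `|lw n mu i - lw m nu j|%N.
have nm11 : nonmid n m 1 1 by rewrite /nonmid /is_mid; lia.
split=> [i j hi hj nm | ].
  have le_row := @bigminn_le _ (index_iota 1 n.+1) xpredT row d i
    ltac:(rewrite mem_index_iota; lia) isT.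
  have le_ij := @bigminn_le _ (index_iota 1 m.+1) (nonmid n m i)
    (fun j => `|lw n mu i - lw m nu j|%N) d j ltac:(rewrite mem_index_iota; lia) nm.
  by rewrite -abszE lez_nat; exact: leq_trans le_row le_ij.
have seed : exists i j, [/\ (1 <= i <= n)%N, (1 <= j <= m)%N, nonmid n m i j &
    d%:Z = `|lw n mu i - lw m nu j|].
  by exists 1%N, 1%N; split => //; lia.
have [-> // | [i /andP[ir _] ->]] := bigminn_attained (index_iota 1 n.+1) xpredT row d.
rewrite /row; cbv beta.
have [-> // | [j /andP[jr nm] ->]] := bigminn_attained (index_iota 1 m.+1) (nonmid n m i)
  (fun j => `|lw n mu i - lw m nu j|%N) d.
by move: ir jr; rewrite !mem_index_iota => ir jr; exists i, j; split => //; lia.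
Qed.

(* [2 (t - kappa)] *)
Definition doubled_offset (n m : nat) (mu nu : nat -> int) (s : int) : int :=
  2 * s + 1 - n%:Z + m%:Z - wt n mu - wt m nu.

Lemma crit_iff_window n m mu nu s :
  `|(s%:~R + 1 - (n%:R - m%:R) / 2 : rat) - kappa n m mu nu| < Lhalf n m mu nu + 1 / 2
  <-> `|doubled_offset n m mu nu s| <= (L0 n m mu nu)%:Z.
Proof.
rewrite /kappa /Lhalf; set z := doubled_offset n m mu nu s; set L := L0 n m mu nu.
have -> : (s%:~R + 1 - (n%:R - m%:R) / 2 : rat) - (wt n mu + wt m nu + 1)%:~R / 2
    = z%:~R / 2.
  by rewrite /z /doubled_offset !(intrD, intrN, intrM) -!pmulrn; field.
rewrite normrM normfV (ger0_norm (_ : (0 : rat) <= 2)) // -intr_norm.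
have -> : (L%:R : rat) = L%:Z%:~R by rewrite pmulrn.
have -> : ((`|z|%:~R / 2 : rat) < L%:Z%:~R / 2 + 1 / 2) = ((`|z|%:~R : rat) < (L%:Z + 1)%:~R).
  by rewrite intrD; apply/idP/idP => ?; lra.
by rewrite ltr_int; split; lia.
Qed.

Lemma doubled_offset_le_iff_lt n m mu nu s (L : int) :
  (exists i j, L = `|lw n mu i - lw m nu j|) ->
  (`|doubled_offset n m mu nu s| <= L <-> `|doubled_offset n m mu nu s| < L).
Proof. by move=> [i [j ->]]; rewrite /doubled_offset /lw /wt; split; lia. Qed.

Lemma dualw_lw N mu i : X0plus N mu -> (1 <= i <= N)%N ->
  2 * dualw N mu i = lw N mu i - N.+1%:Z - wt N mu + 2 * i%:Z.
Proof. by move=> [_ sym] hi; have := sym i hi; rewrite /dualw /lw /wt; lia. Qed.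

Lemma lam_lw m nu a j : 2 * lam nu a j = lw m nu j - m.+1%:Z + wt m nu + 2 * (a j)%:Z.
Proof. by rewrite /lam /lw /wt; lia. Qed.

Lemma condI_in_gap n m mu nu a s j : X0plus n mu -> (1 <= a j < n)%N ->
  condI n mu nu a s j <-> in_gap (lw n mu) (lw m nu) a (doubled_offset n m mu nu s) j.
Proof.
move=> Xmu a_range.
have := dualw_lw (i := a j) Xmu ltac:(lia); have := dualw_lw (i := (a j).+1) Xmu ltac:(lia).
have := lam_lw m nu a j; rewrite /condI /in_gap /doubled_offset.
by move=> *; split => [[? ?] | /andP[? ?]]; [apply/andP | ]; split; lia.
Qed.

Lemma middle_condition_in_window n m mu nu a s :
  odd n -> odd m -> X0plus n mu -> X0plus m nu -> interlacing n m (lw n mu) (lw m nu) a ->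
  let z := doubled_offset n m mu nu s in
  (if ~~ odd (njumps m a) then `|z| < lw n mu n.-1./2 else `|z| < lw m nu m.-1./2) <->
  (if ~~ odd (njumps m a) then
     dualw n mu (n.-1./2) >= lam nu a (m.+1./2) - s /\
     lam nu a (m.+1./2) - s >= dualw n mu ((n + 3)./2) - 1
   else
     lam nu a (m.-1./2) >= dualw n mu (n.+1./2) + s /\
     dualw n mu (n.+1./2) + s >= lam nu a ((m + 3)./2)).
Proof.
move=> n_odd m_odd Xmu Xnu I z; have n3 := three_le_n I n_odd m_odd.
case: ifPn => [_ | odd_k].
  have := dualw_lw (i := n.-1./2) Xmu ltac:(lia).
  have := dualw_lw (i := (n + 3)./2) Xmu ltac:(lia).
  have := lam_lw m nu a m.+1./2; have := l'_mid I n_odd m_odd.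
  have := a_mid I n_odd m_odd; have := l_above_mid I n_odd m_odd.
  by rewrite /z /doubled_offset => *; split => [? | [? ?]]; [split | ]; lia.
move/negPn: odd_k; rewrite (odd_njumps I n_odd m_odd) => /andP[m1 /eqP a_h].
have a_h2 : a (m + 3)./2 = n.+1./2.
  rewrite (_ : (m + 3)./2 = m.+1 - m.-1./2)%N; last by lia.
  by rewrite (a_mirror I n_odd m_odd) ?a_h; [lia | lia | apply/eqP; lia].
have := dualw_lw (i := n.+1./2) Xmu ltac:(lia); have := l_mid I n_odd m_odd.
have := lam_lw m nu a m.-1./2; have := lam_lw m nu a (m + 3)./2.
have := antisymmetric_l' I (i := m.-1./2) ltac:(lia).
rewrite (_ : (m.+1 - m.-1./2 = (m + 3)./2)%N); last by lia.
by rewrite /z /doubled_offset => *; split => [? | [? ?]]; [split | ]; lia.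
Qed.

Theorem proposition3p2 (n m : nat) (mu nu : nat -> int) (a : nat -> nat) (s : int) :
  (1 <= n)%N -> (1 <= m)%N -> ~~ ((n == 1) && (m == 1))%N ->
  X0plus n mu -> X0plus m nu ->
  standing n m mu nu ->
  position_tuple n m mu nu a ->
  let t : rat := s%:~R + 1 - (n%:R - m%:R) / 2 in
  let crit := `|t - kappa n m mu nu| < Lhalf n m mu nu + 1 / 2 in
  (~~ (odd n && odd m) ->
     (crit <-> forall j : nat, (1 <= j <= m)%N -> condI n mu nu a s j)) /\
  (odd n && odd m ->
     (crit <->
       (forall j : nat, (1 <= j <= m)%N -> j != m.+1./2 -> condI n mu nu a s j) /\
       (if ~~ odd (njumps m a) then
          dualw n mu (n.-1./2) >= lam nu a (m.+1./2) - s /\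
          lam nu a (m.+1./2) - s >= dualw n mu ((n + 3)./2) - 1
        else
          lam nu a (m.-1./2) >= dualw n mu (n.+1./2) + s /\
          dualw n mu (n.+1./2) + s >= lam nu a ((m + 3)./2)))).
Proof.
move=> n1 m1 not11 Xmu Xnu st pos t crit.
have I := interlacing_of_standing Xmu Xnu st pos.
have hL := min_gap_L0 mu nu n1 m1 not11.
have critE : crit <-> `|doubled_offset n m mu nu s| < (L0 n m mu nu)%:Z.
  rewrite -doubled_offset_le_iff_lt; first exact: crit_iff_window.
  by have [_ [i [j [_ _ _ ->]]]] := hL; exists i, j.
have gapE j : (1 <= j <= m)%N ->
    condI n mu nu a s j <-> in_gap (lw n mu) (lw m nu) a (doubled_offset n m mu nu s) j.
  by move=> hj; have [a_range _ _] := position I hj; exact: condI_in_gap.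
split => [nonexc | /andP[n_odd m_odd]].
- rewrite critE (window_iff_in_gap I _ nonexc hL).
  by split => gap j hj; apply/(gapE j hj)/gap.
- rewrite critE (window_iff_in_gap_exceptional I n_odd m_odd _ hL).
  rewrite (middle_condition_in_window s n_odd m_odd Xmu Xnu I).
  by split => -[gap mid]; split => // j hj jm; apply/(gapE j hj)/gap.
Qed.
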